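(* Let $n\ge 3$ and consider the right lobster $\mathcal{L}^{1,1}_{n-2}$. For $1\le i<j\le n$ let $M_{j,i}$ be the unique tableau in $\mathrm{SET}(\mathcal{L}^{1,1}_{n-2})$ with $j$ in the top claw cell and $i$ in the bottom claw cell. Then the poset $\mathrm{SET}(\mathcal{L}^{1,1}_{n-2})$ is isomorphic to the root poset of the root system $A_{n-1}$, and also to the poset $\{(i,j)\in\mathbb{N}^2: i+j\le n-2\}$ ordered by $(i,j)\ge(k,\ell)$ iff $k\ge i$ and $\ell\ge j$. It has exactly $n-1$ minimal elements, namely $M_{i+1,i}$ for $1\le i\le n-1$; all minimal elements have the same number of inversions; and $|\mathrm{SET}(\mathcal{L}^{1,1}_{n-2})|=\binom{n}{2}$.
   Context: For positive integers $b,c_1,c_2$, the right lobster $\mathcal{L}^{c_1,c_2}_b$ is the skew diagram $\alpha/\beta$ with $\alpha=(b+1+c_2,\,b+1,\,b+1+c_1)$ and $\beta=(b+1,1,b+1)$ (rows numbered from the bottom; $\alpha/\beta$ consists of the cells in row $i$, column $j$ with $\beta_i<j\le\alpha_i$). Thus it has three rows: the bottom row with $c_2$ cells in columns $b+2,\ldots,b+1+c_2$, the middle row (the body) with $b$ cells in columns $2,\ldots,b+1$, and the top row with $c_1$ cells in columns $b+2,\ldots,b+1+c_1$; the top and bottom rows are the claws. $\mathrm{SET}$ of a skew shape with $m$ cells is the set of bijective fillings with $1,\ldots,m$ whose rows increase left to right and columns increase bottom to top. For $1\le i\le m-1$, $\pi_i(T)=T$ if $i+1$ is in a strictly higher row than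 $i$, $\pi_i(T)=s_i(T)$ (swap $i$ and $i+1$) if $i+1$ is in a strictly lower row than $i$, and $\pi_i(T)=0$ otherwise; the poset order is $T\le T'$ iff $T'$ is obtained from $T$ by a sequence of operators $\pi_i$ (all intermediate results nonzero). The number of inversions of a tableau is the number of inversions of its reading word, obtained by reading rows right to left, from the top row down. The root poset of $A_{n-1}$ is the set of positive roots $\{e_i-e_j:1\le i<j\le n\}$ with $\gamma\le\delta$ iff $\delta-\gamma$ is a nonnegative integer combination of the simple roots $e_k-e_{k+1}$. *)

From mathcomp Require Import all_boot all_order all_algebra.
Set Implicit Arguments. Unset Strict Implicit. Unset Printing Implicit Defensive.
Import GRing.Theory Num.Theory.

(* A cell is (row, column); rows are numbered from the bottom starting at 1. *)
Definition cell := (nat * nat)%type.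

(* Cells of the skew diagram al/be: row r (1-based), columns be_r < c <= al_r.
   al and be list the rows from the bottom up. *)
Definition skew_cells (al be : seq nat) : seq cell :=
  flatten [seq [seq (r.+1, c) | c <- iota (nth 0 be r).+1 (nth 0 al r - nth 0 be r)]
          | r <- iota 0 (size al)].

(* A bijective filling T with 1..m is encoded by the word w : seq cell whose
   (k-1)-th item is the cell containing k.  The entry of cell c is then: *)
Definition entry (w : seq cell) (c : cell) : nat := (index c w).+1.

Definition row_of (w : seq cell) (k : nat) : nat := (nth (0, 0) w k.-1).1.

Definition is_SET (al be : seq nat) (w : seq cell) : Prop :=
  perm_eq w (skew_cells al be) /\
  (forall c d, c \in w -> d \in w -> c.1 = d.1 -> c.2 < d.2 -> entry w c < entry w d) /\
  (forall c d, c \in w -> d \in w -> c.2 = d.2 -> c.1 < d.1 -> entry w c < entry w d).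

(* s_i : swap the values i and i+1 (i.e. positions i-1 and i of the word). *)
Definition swap_vals (w : seq cell) (i : nat) : seq cell :=
  [seq nth (0, 0) w (if j == i.-1 then i else if j == i then i.-1 else j)
  | j <- iota 0 (size w)].

(* pi_i ; None encodes the value 0. *)
Definition pi_op (i : nat) (w : seq cell) : option (seq cell) :=
  if row_of w i < row_of w i.+1 then Some w
  else if row_of w i.+1 < row_of w i then Some (swap_vals w i)
  else None.

Fixpoint apply_pis (ps : seq nat) (w : seq cell) : option (seq cell) :=
  match ps with
  | [::] => Some w
  | i :: ps' =>
      if (0 < i) && (i < size w) then
        match pi_op i w with
        | Some w' => apply_pis ps' w'
        | None => None
        end
      else None
  end.

Definition tab_le (w w' : seq cell) : Prop := exists ps, apply_pis ps w = Some w'.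

Definition reading_cells (al be : seq nat) : seq cell :=
  flatten [seq rev [seq (r.+1, c) | c <- iota (nth 0 be r).+1 (nth 0 al r - nth 0 be r)]
          | r <- rev (iota 0 (size al))].

Definition reading_word (al be : seq nat) (w : seq cell) : seq nat :=
  [seq entry w c | c <- reading_cells al be].

Definition inversions (s : seq nat) : nat :=
  \sum_(j < size s) \sum_(i < j) (nth 0 s j < nth 0 s i).

Definition inv_tab (al be : seq nat) (w : seq cell) : nat :=
  inversions (reading_word al be w).

Definition lobster_alpha (b c1 c2 : nat) : seq nat := [:: b.+1 + c2; b.+1; b.+1 + c1].
Definition lobster_beta (b c1 c2 : nat) : seq nat := [:: b.+1; 1; b.+1].

Definition top_claw (b : nat) : cell := (3, b.+2).
Definition bottom_claw (b : nat) : cell := (1, b.+2).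

Definition lobSET (n : nat) (w : seq cell) : Prop :=
  is_SET (lobster_alpha (n - 2) 1 1) (lobster_beta (n - 2) 1 1) w.

Definition lob_inv (n : nat) (w : seq cell) : nat :=
  inv_tab (lobster_alpha (n - 2) 1 1) (lobster_beta (n - 2) 1 1) w.

Definition is_M (n j i : nat) (w : seq cell) : Prop :=
  lobSET n w /\ entry w (top_claw (n - 2)) = j /\ entry w (bottom_claw (n - 2)) = i.

Definition minimal {A : Type} (P : A -> Prop) (le : A -> A -> Prop) (x : A) : Prop :=
  P x /\ forall y, P y -> le y x -> y = x.

Definition order_iso {A B : Type} (PA : A -> Prop) (leA : A -> A -> Prop)
    (PB : B -> Prop) (leB : B -> B -> Prop) : Prop :=
  exists f : A -> B,
    (forall a, PA a -> PB (f a)) /\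
    (forall a a', PA a -> PA a' -> f a = f a' -> a = a') /\
    (forall b, PB b -> exists2 a, PA a & f a = b) /\
    (forall a a', PA a -> PA a' -> (leA a a' <-> leB (f a) (f a'))).

(* Root poset of A_{n-1}: (i, j) with 1 <= i < j <= n stands for e_i - e_j. *)
Definition is_pos_root (n : nat) (p : nat * nat) : Prop := 0 < p.1 < p.2 /\ p.2 <= n.

Definition root_vec (p : nat * nat) (t : nat) : int :=
  ((t == p.1) : nat)%:Z - ((t == p.2) : nat)%:Z.

Definition simple_root (k t : nat) : int := root_vec (k, k.+1) t.

Definition root_le (n : nat) (g d : nat * nat) : Prop :=
  exists c : nat -> nat, forall t, 0 < t <= n ->
    (root_vec d t - root_vec g t = \sum_(1 <= k < n) (c k)%:Z * simple_root k t)%R.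

Definition grid (n : nat) (p : nat * nat) : Prop := p.1 + p.2 <= n - 2.
Definition grid_le (p q : nat * nat) : Prop := q.1 <= p.1 /\ q.2 <= p.2.

From mathcomp Require Import all_boot all_order all_algebra zify.
Set Implicit Arguments. Unset Strict Implicit. Unset Printing Implicit Defensive.
Import GRing.Theory.

(* A tableau of L^{1,1}_b is determined by its claw entries i (bottom) and j (top),
   1 <= i < j <= b+2: the body holds the remaining values in increasing order.  An
   operator pi_k moves such a tableau only for k = i-1, which lowers i, and for k = j,
   which raises j; hence T <= T' iff [i, j] is contained in [i', j'].  Identifying
   (i, j) with e_i - e_j, this is the root order of A_{b+1}: a vector with coordinate
   sum 0 is a nonnegative combination of simple roots iff all partial sums of its
   coordinates are nonnegative,
   and for e_c - e_d - (e_a - e_b) these partial sums are [c <= t < d] - [a <= t < b].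
   The minimal tableaux have j = i+1; their reading word is i+1, then the b body values
   in decreasing order, then i, with C(b,2) + b + 1 inversions whatever i is. *)

(** * Fillings and the operators pi_k *)

Lemma eq_from_index (T : eqType) (s t : seq T) :
  uniq s -> size s = size t -> {in s, forall x, index x s = index x t} -> s = t.
Proof.
case: s => [|x0 s] Us Est Eidx; first by case: t Est Eidx.
apply: (eq_from_nth (x0 := x0) Est) => k lt_k.
have Ek : index (nth x0 (x0 :: s) k) t = k by rewrite -Eidx ?mem_nth // index_uniq.
by rewrite -{2}Ek nth_index // -index_mem Ek -Est.
Qed.

Lemma entry_inj (w : seq cell) : {in w &, injective (entry w)}.
Proof. by move=> c d c_w d_w [E]; rewrite -(nth_index (0, 0) c_w) E nth_index. Qed.

Lemma entry_le_size (w : seq cell) c : c \in w -> entry w c <= size w.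
Proof. by rewrite -index_mem. Qed.

Lemma entry_nth (w : seq cell) k : uniq w -> k < size w -> entry w (nth (0, 0) w k) = k.+1.
Proof. by move=> Uw lt_k; rewrite /entry index_uniq. Qed.

Lemma apply_pis_cat ps qs w w1 :
  apply_pis ps w = Some w1 -> apply_pis (ps ++ qs) w = apply_pis qs w1.
Proof.
elim: ps w => [|k ps IH] w /=; first by case=> ->.
by case: ifP => // _; case: pi_op => // w2; exact: IH.
Qed.

Lemma tab_le_refl w : tab_le w w.
Proof. by exists [::]. Qed.

Lemma tab_le_trans w1 w2 w3 : tab_le w1 w2 -> tab_le w2 w3 -> tab_le w1 w3.
Proof. by move=> [ps E12] [qs E23]; exists (ps ++ qs); rewrite (apply_pis_cat _ E12). Qed.

Lemma tab_le_pi_op k w w' : 0 < k < size w -> pi_op k w = Some w' -> tab_le w w'.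
Proof. by move=> k_w E; exists [:: k]; rewrite /= k_w E. Qed.

Lemma order_iso_trans (A B C : Type) (PA : A -> Prop) (PB : B -> Prop) (PC : C -> Prop)
    leA leB leC :
  order_iso PA leA PB leB -> order_iso PB leB PC leC -> order_iso PA leA PC leC.
Proof.
move=> [f [fP [f_inj [f_surj f_mono]]]] [g [gP [g_inj [g_surj g_mono]]]].
exists (g \o f); split; [|split; [|split]].
- by move=> a /fP /gP.
- by move=> a a' Pa Pa' /(g_inj _ _ (fP _ Pa) (fP _ Pa')) /f_inj; apply.
- by move=> c /g_surj [_ /f_surj [a Pa <-] <-]; exists a.
- by move=> a a' Pa Pa'; rewrite f_mono // g_mono //; apply: fP.
Qed.

(** * Inversions *)

Lemma inversions_cons x s :
  inversions (x :: s) = count (fun y => y < x) s + inversions s.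
Proof.
have sum_count (t : seq nat) : \sum_(j < size t) (nth 0 t j < x) = count (fun y => y < x) t.
  by elim: t => [|y t IH]; rewrite ?big_ord0 // big_ord_recl /= IH.
rewrite /inversions /= big_ord_recl /= big_ord0 add0n.
under eq_bigr => j _ do rewrite big_ord_recl /=.
by rewrite big_split /= sum_count.
Qed.

Lemma inversions_rcons s e :
  inversions (rcons s e) = inversions s + count (fun y => e < y) s.
Proof.
elim: s => [|x s IH]; first by rewrite /inversions /= big_ord1 !big_ord0.
rewrite rcons_cons !inversions_cons IH -cats1 count_cat /= addn0; lia.
Qed.

Lemma inversions_sorted_gt s : sorted (fun x y => y < x) s -> inversions s = 'C(size s, 2).
Proof.
elim: s => [|x s IH] x_s; first by rewrite /inversions big_ord0.
rewrite inversions_cons IH ?(path_sorted x_s) //.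
have -> : count (fun y => y < x) s = size s.
  apply/eqP; rewrite -all_count; apply: order_path_min x_s; exact: (fun a b c h1 h2 => ltn_trans h2 h1).
by rewrite binS bin1 addnC.
Qed.

(** * The root poset of A_{n-1} *)

Definition sub_interval (p q : nat * nat) : Prop := q.1 <= p.1 /\ p.2 <= q.2.

Lemma sub_interval_trans p q r : sub_interval p q -> sub_interval q r -> sub_interval p r.
Proof. by rewrite /sub_interval => -[? ?] [? ?]; split; lia. Qed.

Section RootPoset.
Local Open Scope ring_scope.

Definition psum (x : nat -> int) (t : nat) : int := \sum_(s < t) x s.+1.

Lemma psumS x t : psum x t.+1 = psum x t + x t.+1.
Proof. by rewrite /psum big_ord_recr. Qed.

Definition trunc_coef n (c : nat -> nat) t : int := if (0 < t < n)%N then (c t)%:Z else 0.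

Lemma sum_simple_roots n (c : nat -> nat) t : (0 < t)%N ->
  \sum_(1 <= k < n) (c k)%:Z * simple_root k t = trunc_coef n c t - trunc_coef n c t.-1.
Proof.
move=> t_gt0.
have split_root k : (c k)%:Z * simple_root k t =
    (if k == t then (c k)%:Z else 0) - (if k == t.-1 then (c k)%:Z else 0).
  rewrite /simple_root /root_vec /= eq_sym.
  have -> : (t == k.+1) = (k == t.-1) by apply/eqP/eqP; lia.
  by case: (k == t); case: (k == t.-1) => /=; lia.
by rewrite (eq_bigr _ (fun k _ => split_root k)) sumrB -!big_mkcond /= !big_nat1_eq.
Qed.

Lemma psum_simple_comb n (c : nat -> nat) x :
  (forall t, (0 < t <= n)%N -> x t = \sum_(1 <= k < n) (c k)%:Z * simple_root k t) ->
  forall t, (t <= n)%N -> psum x t = trunc_coef n c t.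
Proof.
move=> Ex; elim=> [|t IH] t_n; first by rewrite /psum big_ord0.
by rewrite psumS IH ?(ltnW t_n) // Ex // sum_simple_roots // addrC subrK.
Qed.

Lemma simple_combP n x : psum x n = 0 ->
  (exists c : nat -> nat, forall t, (0 < t <= n)%N ->
     x t = \sum_(1 <= k < n) (c k)%:Z * simple_root k t)
  <-> (forall t, (t <= n)%N -> 0 <= psum x t).
Proof.
move=> x_n; split=> [[c Ex] t t_n | psum_ge0].
  by rewrite (psum_simple_comb Ex) // /trunc_coef; case: ifP.
exists (fun k => `|psum x k|%N) => t t_n.
have trunc_psum s : (s <= n)%N -> trunc_coef n (fun k => `|psum x k|%N) s = psum x s.
  move=> s_n; rewrite /trunc_coef; case: ifP => [_ | s_0n]; first by rewrite gez0_abs ?psum_ge0.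
  have [-> | ->] : s = 0%N \/ s = n by lia.
    by rewrite /psum big_ord0.
  by rewrite x_n.
have t_gt0 : (0 < t)%N by case/andP: t_n.
rewrite sum_simple_roots // !trunc_psum; try lia.
by rewrite -{2}(prednK t_gt0) psumS prednK // addrAC subrr add0r.
Qed.

Lemma psum_root_vec p t : (0 < p.1)%N -> (0 < p.2)%N ->
  psum (root_vec p) t = ((p.1 <= t)%N : nat)%:Z - ((p.2 <= t)%N : nat)%:Z.
Proof.
move=> p1_gt0 p2_gt0; elim: t => [|t IH]; first by rewrite /psum big_ord0; lia.
by rewrite psumS IH /root_vec; lia.
Qed.

Lemma root_leP n g d : is_pos_root n g -> is_pos_root n d ->
  root_le n g d <-> sub_interval g d.
Proof.
move=> [g_lt g_n] [d_lt d_n].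
have psumE t : psum (fun s => root_vec d s - root_vec g s) t =
    ((d.1 <= t)%N : nat)%:Z - ((d.2 <= t)%N : nat)%:Z
    - (((g.1 <= t)%N : nat)%:Z - ((g.2 <= t)%N : nat)%:Z).
  by rewrite /psum sumrB -!/(psum _ t) !psum_root_vec //; lia.
rewrite /root_le simple_combP; last by rewrite psumE; lia.
split=> [psum_ge0 | [le1 le2] t t_n]; last by rewrite psumE; lia.
have := psum_ge0 g.1; have := psum_ge0 g.2.-1; rewrite !psumE; split; lia.
Qed.
End RootPoset.

Lemma pos_roots_iso_root_le n :
  order_iso (is_pos_root n) sub_interval (is_pos_root n) (root_le n).
Proof.
exists id; split=> //; split=> //; split=> [p p_root | p q p_root q_root]; first by exists p.
exact: iff_sym (root_leP p_root q_root).
Qed.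

Lemma pos_roots_iso_grid n : 1 < n ->
  order_iso (is_pos_root n) sub_interval (grid n) grid_le.
Proof.
move=> n_gt1; exists (fun p => (p.1.-1, n - p.2)); split; [|split; [|split]].
- by move=> [i j] [/= ? ?]; rewrite /grid /=; lia.
- by move=> [i j] [i' j'] [/= ? ?] [/= ? ?] [? ?]; congr pair; lia.
- move=> [x y]; rewrite /grid /= => xy_n.
  by exists (x.+1, n - y); rewrite /is_pos_root /=; [split | congr pair]; lia.
- move=> [i j] [i' j'] [/= ? ?] [/= ? ?]; rewrite /sub_interval /grid_le /=.
  by split=> -[? ?]; split; lia.
Qed.

Fixpoint pos_roots n : seq (nat * nat) :=
  if n is m.+1 then pos_roots m ++ [seq (i, m.+1) | i <- iota 1 m] else [::].

Lemma size_pos_roots n : size (pos_roots n) = 'C(n, 2).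
Proof.
elim: n => [|n IH] //=; rewrite size_cat size_map size_iota IH.
by rewrite [RHS]binS bin1.
Qed.

Lemma mem_pos_roots n p : p \in pos_roots n <-> is_pos_root n p.
Proof.
case: p => i j; rewrite /is_pos_root /=; elim: n => [|n IH] /=; first by split=> //; lia.
rewrite mem_cat; split=> [/orP [/IH | /mapP [k]] | ij_root].
- by lia.
- by rewrite mem_iota => k_n [-> ->]; lia.
case: (ltnP j n.+1) => j_n; apply/orP; [by left; apply/IH; lia | right].
apply/mapP; exists i; first by rewrite mem_iota; lia.
by congr pair; lia.
Qed.

Lemma uniq_pos_roots n : uniq (pos_roots n).
Proof.
elim: n => [|n IH] //=; rewrite cat_uniq IH map_inj_uniq ?iota_uniq ?andbT; last by move=> ? ? [].
apply/hasPn => _ /mapP [k _ ->]; apply/negP => /mem_pos_roots [_ /= ?]; lia.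
Qed.

Definition simple_roots n : seq (nat * nat) := [seq (k, k.+1) | k <- iota 1 n.-1].

Lemma mem_simple_roots n p : p \in simple_roots n <-> is_pos_root n p /\ p.2 = p.1.+1.
Proof.
case: p => i j; rewrite /is_pos_root /=; split=> [/mapP [k] | [ij_root ->]].
  by rewrite mem_iota => k_n [-> ->]; split=> //; lia.
by apply/mapP; exists i; rewrite // mem_iota; lia.
Qed.

Lemma uniq_simple_roots n : uniq (simple_roots n).
Proof. by rewrite map_inj_uniq ?iota_uniq // => k l []. Qed.

(** * Standard tableaux of the lobster L^{1,1}_b *)

Definition lob_body b : seq cell := [seq (2, c) | c <- iota 2 b].
Definition lob_cells b : seq cell := bottom_claw b :: lob_body b ++ [:: top_claw b].

Lemma skew_cells_lob b :
  skew_cells (lobster_alpha b 1 1) (lobster_beta b 1 1) = lob_cells b.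
Proof. by rewrite /skew_cells /= addn1 subSnn subn1. Qed.

Lemma reading_cells_lob b :
  reading_cells (lobster_alpha b 1 1) (lobster_beta b 1 1) =
  top_claw b :: rev (lob_body b) ++ [:: bottom_claw b].
Proof. by rewrite /reading_cells /= addn1 subSnn subn1. Qed.

Lemma mem_lob_body b x : (x \in lob_body b) = (x.1 == 2) && (1 < x.2 <= b.+1).
Proof.
case: x => r c; apply/mapP/andP => [[c' + [-> ->]]|[/eqP /= -> c_b]].
  by rewrite mem_iota => ?; split => //=; lia.
by exists c => //; rewrite mem_iota; lia.
Qed.

Lemma mem_lob_cells b x :
  (x \in lob_cells b) = [|| x == bottom_claw b, x == top_claw b | x \in lob_body b].
Proof. by rewrite inE mem_cat mem_seq1; case: (x \in lob_body b); rewrite ?orbT ?orbF. Qed.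

Lemma uniq_lob_cells b : uniq (lob_cells b).
Proof.
rewrite /= mem_cat mem_seq1 cat_uniq /= !mem_lob_body /= andbT.
by rewrite map_inj_uniq ?iota_uniq // => c d [].
Qed.

Lemma size_lob_cells b : size (lob_cells b) = b.+2.
Proof. by rewrite /= size_cat size_map size_iota addn1. Qed.

Definition lob_tableau b := is_SET (lobster_alpha b 1 1) (lobster_beta b 1 1).

Definition bot_entry b w := entry w (bottom_claw b).
Definition top_entry b w := entry w (top_claw b).
Definition claws b w := (bot_entry b w, top_entry b w).
Definition body_entries b w := [seq entry w c | c <- lob_body b].

Section LobTableau.
Variables (b : nat) (w : seq cell).
Hypothesis w_tab : lob_tableau b w.

Lemma lob_tableau_perm : perm_eq w (lob_cells b).
Proof. by case: w_tab; rewrite skew_cells_lob. Qed.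

Lemma lob_tableau_uniq : uniq w.
Proof. by rewrite (perm_uniq lob_tableau_perm) uniq_lob_cells. Qed.

Lemma lob_tableau_size : size w = b.+2.
Proof. by rewrite (perm_size lob_tableau_perm) size_lob_cells. Qed.

Lemma lob_tableau_mem x : (x \in w) = (x \in lob_cells b).
Proof. exact: (perm_mem lob_tableau_perm x). Qed.

Lemma claws_pos_root : is_pos_root b.+2 (claws b w).
Proof.
have bot_w : bottom_claw b \in w by rewrite lob_tableau_mem mem_lob_cells eqxx.
have top_w : top_claw b \in w by rewrite lob_tableau_mem mem_lob_cells eqxx orbT.
split; last by rewrite -lob_tableau_size entry_le_size.
by case: w_tab => _ [_ col_incr]; rewrite /= col_incr.
Qed.

Lemma mem_body_cell c : 1 < c <= b.+1 -> (2, c) \in w.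
Proof. by move=> c_b; rewrite lob_tableau_mem mem_lob_cells mem_lob_body c_b !orbT. Qed.

Lemma sorted_body_entries : sorted ltn (body_entries b w).
Proof.
case: w_tab => _ [row_incr _]; rewrite /body_entries /lob_body -map_comp.
apply: (homo_sorted_in (P := mem (iota 2 b))) (iota_ltn_sorted 2 b); last exact/allP.
move=> c d; rewrite !mem_iota => c_b d_b lt_cd /=.
by apply: row_incr => //; apply: mem_body_cell; lia.
Qed.

Lemma mem_body_entries x :
  (x \in body_entries b w) = [&& 0 < x, x <= b.+2, x != bot_entry b w & x != top_entry b w].
Proof.
have bot_w : bottom_claw b \in w by rewrite lob_tableau_mem mem_lob_cells eqxx.
have top_w : top_claw b \in w by rewrite lob_tableau_mem mem_lob_cells eqxx orbT.
apply/mapP/and4P => [[c c_body ->]|[x_gt0 x_le x_bot x_top]].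
  have c_w : c \in w by rewrite lob_tableau_mem mem_lob_cells c_body !orbT.
  split=> //; first by rewrite -lob_tableau_size entry_le_size.
    by apply: contraTneq c_body => /(entry_inj c_w bot_w) ->; rewrite mem_lob_body.
  by apply: contraTneq c_body => /(entry_inj c_w top_w) ->; rewrite mem_lob_body.
have lt_x : x.-1 < size w by rewrite lob_tableau_size; lia.
have := entry_nth lob_tableau_uniq lt_x; rewrite prednK // => Ex.
have := mem_nth (0, 0) lt_x; rewrite lob_tableau_mem mem_lob_cells.
case/or3P => [/eqP Ebot|/eqP Etop|c_body]; last by exists (nth (0, 0) w x.-1).
- by move: x_bot; rewrite -Ex Ebot eqxx.
- by move: x_top; rewrite -Ex Etop eqxx.
Qed.
End LobTableau.

Lemma lob_tableau_claws_inj b w w' :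
  lob_tableau b w -> lob_tableau b w' -> claws b w = claws b w' -> w = w'.
Proof.
move=> w_tab w'_tab [Ebot Etop].
have Ebody : body_entries b w = body_entries b w'.
  apply: (irr_sorted_eq ltn_trans ltnn); try exact: sorted_body_entries.
  by move=> x; rewrite !mem_body_entries // /bot_entry /top_entry /entry Ebot Etop.
apply: eq_from_index (lob_tableau_uniq w_tab) _ _; first by rewrite (lob_tableau_size w_tab) (lob_tableau_size w'_tab).
move=> x; rewrite (lob_tableau_mem w_tab) mem_lob_cells => /or3P [/eqP-> | /eqP-> | x_body].
- exact: Ebot.
- exact: Etop.
by move/eq_in_map: Ebody => /(_ x x_body) /succn_inj.
Qed.

(* A body value k lies in column 1 + #{body values <= k}. *)
Definition cell_of_claws b (p : nat * nat) k : cell :=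
  if k == p.1 then bottom_claw b else if k == p.2 then top_claw b
  else (2, k.+1 - (p.1 < k) - (p.2 < k)).

Definition tableau_of_claws b p := [seq cell_of_claws b p k | k <- iota 1 b.+2].

Ltac cell_cases :=
  rewrite /cell_of_claws /bottom_claw /top_claw /=;
  repeat case: ifP => /eqP ?; try (congr pair; lia); try lia; try (exfalso; lia).

Section TableauOfClaws.
Variables (b i j : nat).
Hypothesis ij_root : is_pos_root b.+2 (i, j).
Local Notation cellT := (cell_of_claws b (i, j)).
Local Notation T := (tableau_of_claws b (i, j)).

Lemma size_tableau_of_claws : size T = b.+2.
Proof. by rewrite size_map size_iota. Qed.

Lemma nth_tableau_of_claws k : k < b.+2 -> nth (0, 0) T k = cellT k.+1.
Proof. by move=> k_b; rewrite (nth_map 0) ?size_iota // nth_iota. Qed.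

Lemma mem_tableau_of_claws c : reflect (exists2 k, 0 < k <= b.+2 & c = cellT k) (c \in T).
Proof.
apply: (iffP mapP) => [[k]|[k]] k_b ->; exists k => //; move: k_b; rewrite mem_iota; lia.
Qed.

Lemma uniq_tableau_of_claws : uniq T.
Proof.
have [ij_lt j_le] : 0 < i < j /\ j <= b.+2 := ij_root.
rewrite map_inj_in_uniq ?iota_uniq // => k l; rewrite !mem_iota => k_b l_b.
by cell_cases; case=> *; lia.
Qed.

Lemma perm_tableau_of_claws : perm_eq T (lob_cells b).
Proof.
have [ij_lt j_le] : 0 < i < j /\ j <= b.+2 := ij_root.
apply: uniq_perm; [exact: uniq_tableau_of_claws | exact: uniq_lob_cells |].
have sub_cells : {subset T <= lob_cells b}.
  move=> c /mem_tableau_of_claws [k k_b ->]; rewrite mem_lob_cells mem_lob_body.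
  by cell_cases; rewrite ?eqxx ?orbT //=; lia.
have [] := uniq_min_size uniq_tableau_of_claws sub_cells => //.
by rewrite size_tableau_of_claws size_lob_cells.
Qed.

Lemma entry_tableau_of_claws k : 0 < k <= b.+2 -> entry T (cellT k) = k.
Proof.
move=> k_b; have k_pos : 0 < k by case/andP: k_b.
have -> : cellT k = nth (0, 0) T k.-1 by rewrite nth_tableau_of_claws ?prednK //; lia.
by rewrite entry_nth ?uniq_tableau_of_claws ?size_tableau_of_claws ?prednK //; lia.
Qed.

Lemma tableau_of_clawsK : claws b T = (i, j).
Proof.
have [ij_lt j_le] : 0 < i < j /\ j <= b.+2 := ij_root.
have cell_i : cellT i = bottom_claw b by rewrite /cell_of_claws eqxx.
have cell_j : cellT j = top_claw b by cell_cases.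
by rewrite /claws /bot_entry /top_entry -cell_i -cell_j !entry_tableau_of_claws //; lia.
Qed.

Lemma lob_tableau_of_claws : lob_tableau b T.
Proof.
have [ij_lt j_le] : 0 < i < j /\ j <= b.+2 := ij_root.
split; first by rewrite skew_cells_lob perm_tableau_of_claws.
split=> c d /mem_tableau_of_claws [k k_b ->] /mem_tableau_of_claws [l l_b ->];
  rewrite !entry_tableau_of_claws //; cell_cases; move=> /= *; lia.
Qed.

Lemma row_of_tableau_of_claws k : 0 < k <= b.+2 -> row_of T k = (cellT k).1.
Proof. by move=> k_b; rewrite /row_of nth_tableau_of_claws ?prednK //; lia. Qed.

Lemma swap_vals_tableau_of_claws k q : 0 < k < b.+2 ->
  cellT k.+1 = cell_of_claws b q k -> cellT k = cell_of_claws b q k.+1 ->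
  (forall v, 0 < v <= b.+2 -> v != k -> v != k.+1 -> cellT v = cell_of_claws b q v) ->
  swap_vals T k = tableau_of_claws b q.
Proof.
move=> k_b E_k E_k1 E_other; apply: (@eq_from_nth _ (0, 0)).
  by rewrite size_map size_iota !size_map !size_iota.
move=> x; rewrite size_map size_iota size_tableau_of_claws => x_b.
rewrite (nth_map 0) ?size_iota ?size_tableau_of_claws // nth_iota // add0n.
rewrite [RHS](nth_map 0) ?size_iota // nth_iota // add1n.
case: (x =P k.-1) => [->|x_k1]; first by rewrite nth_tableau_of_claws ?prednK //; lia.
case: (x =P k) => [->|x_k]; first by rewrite nth_tableau_of_claws ?prednK //; lia.
by rewrite nth_tableau_of_claws // E_other //; apply/eqP; lia.
Qed.

Lemma pi_op_bottom : 1 < i -> pi_op i.-1 T = Some (tableau_of_claws b (i.-1, j)).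
Proof.
have [ij_lt j_le] : 0 < i < j /\ j <= b.+2 := ij_root.
move=> i_gt1; rewrite /pi_op !row_of_tableau_of_claws ?prednK; try lia.
rewrite ifF; last by cell_cases.
rewrite ifT; last by cell_cases.
congr Some; apply: swap_vals_tableau_of_claws => [|||v v_b /eqP ? /eqP ?];
  rewrite ?prednK; try lia; cell_cases.
Qed.

Lemma pi_op_top : j < b.+2 -> pi_op j T = Some (tableau_of_claws b (i, j.+1)).
Proof.
have [ij_lt j_le] : 0 < i < j /\ j <= b.+2 := ij_root.
move=> j_lt; rewrite /pi_op !row_of_tableau_of_claws; try lia.
rewrite ifF; last by cell_cases.
rewrite ifT; last by cell_cases.
congr Some; apply: swap_vals_tableau_of_claws => [|||v v_b /eqP ? /eqP ?];
  try lia; cell_cases.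
Qed.

Lemma pi_op_tableau_of_claws k w' : 0 < k < b.+2 -> pi_op k T = Some w' ->
  exists2 q, is_pos_root b.+2 q & sub_interval (i, j) q /\ w' = tableau_of_claws b q.
Proof.
have [ij_lt j_le] : 0 < i < j /\ j <= b.+2 := ij_root.
move=> k_b; case: (eqVneq k.+1 i) => [k_i | k_i].
  have -> : k = i.-1 by lia.
  rewrite pi_op_bottom; last lia.
  by case=> <-; exists (i.-1, j); rewrite /is_pos_root /sub_interval /=; do ?split; lia.
case: (eqVneq k j) => [k_j | k_j].
  rewrite k_j pi_op_top; last lia.
  by case=> <-; exists (i, j.+1); rewrite /is_pos_root /sub_interval /=; do ?split; lia.
rewrite /pi_op !row_of_tableau_of_claws; try lia.
case: ifP => [_ [<-] | _]; first by exists (i, j).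
by rewrite ifF //; cell_cases.
Qed.
End TableauOfClaws.

Lemma apply_pis_tableau_of_claws b ps p w' : is_pos_root b.+2 p ->
  apply_pis ps (tableau_of_claws b p) = Some w' ->
  exists2 q, is_pos_root b.+2 q & sub_interval p q /\ w' = tableau_of_claws b q.
Proof.
elim: ps p => [|k ps IH] [i j] ij_root /=; first by case=> <-; exists (i, j).
rewrite size_map size_iota; case: ifP => // k_b.
case E: pi_op => [w1|] // /=.
have [p1 p1_root [le_p1 ->]] := pi_op_tableau_of_claws ij_root k_b E.
case/(IH _ p1_root) => q q_root [le_q ->].
by exists q => //; split=> //; apply: sub_interval_trans le_p1 le_q.
Qed.

Lemma clawsK b w : lob_tableau b w -> tableau_of_claws b (claws b w) = w.
Proof.
move=> w_tab; have root_w := claws_pos_root w_tab.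
apply: lob_tableau_claws_inj (lob_tableau_of_claws root_w) w_tab _.
exact: tableau_of_clawsK.
Qed.

Lemma tab_le_bottom_claw b i i' j : i' <= i ->
  is_pos_root b.+2 (i', j) -> is_pos_root b.+2 (i, j) ->
  tab_le (tableau_of_claws b (i, j)) (tableau_of_claws b (i', j)).
Proof.
elim: i => [|i IH] le_i' root_i' root_i; first by case: root_i => /=; lia.
case: (eqVneq i' i.+1) => [-> | ne_i']; first exact: tab_le_refl.
have [/= i'_lt _] := root_i'; have [/= i_lt j_le] := root_i.
have le_i : i' <= i by lia.
have root_i1 : is_pos_root b.+2 (i, j) by split=> /=; lia.
apply: tab_le_trans _ (IH le_i root_i' root_i1).
apply: (@tab_le_pi_op i); first by rewrite size_tableau_of_claws; lia.
by rewrite (pi_op_bottom root_i) //; lia.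
Qed.

Lemma tab_le_top_claw b i j j' : j <= j' ->
  is_pos_root b.+2 (i, j) -> is_pos_root b.+2 (i, j') ->
  tab_le (tableau_of_claws b (i, j)) (tableau_of_claws b (i, j')).
Proof.
elim: j' => [|j' IH] le_j' root_j root_j'; first by case: root_j' => /=; lia.
case: (eqVneq j j'.+1) => [-> | ne_j]; first exact: tab_le_refl.
have [/= ij_lt _] := root_j; have [/= ij'_lt j'_le] := root_j'.
have le_j : j <= j' by lia.
have root_j1 : is_pos_root b.+2 (i, j') by split=> /=; lia.
apply: tab_le_trans (IH le_j root_j root_j1) _.
apply: (@tab_le_pi_op j'); first by rewrite size_tableau_of_claws; lia.
by rewrite pi_op_top //; lia.
Qed.

Lemma tab_le_tableau_of_claws b p q : is_pos_root b.+2 p -> is_pos_root b.+2 q ->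
  tab_le (tableau_of_claws b p) (tableau_of_claws b q) <-> sub_interval p q.
Proof.
case: p q => [i j] [i' j'] p_root q_root; split=> [[ps] | [/= le_i le_j]].
  case/(apply_pis_tableau_of_claws p_root) => -[i'' j''] q''_root [le_q'' E].
  by rewrite -(tableau_of_clawsK q_root) E tableau_of_clawsK.
have [/= ij_lt _] := p_root; have [/= ij'_lt j'_le] := q_root.
have mid_root : is_pos_root b.+2 (i', j) by split=> /=; lia.
apply: tab_le_trans (tab_le_bottom_claw le_i mid_root _) (tab_le_top_claw le_j mid_root _).
  by split=> /=; lia.
by split=> /=; lia.
Qed.

Lemma tab_le_lob_tableau b w w' : lob_tableau b w -> lob_tableau b w' ->
  tab_le w w' <-> sub_interval (claws b w) (claws b w').
Proof.
move=> w_tab w'_tab.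
rewrite -{1}(clawsK w_tab) -{1}(clawsK w'_tab).
exact: tab_le_tableau_of_claws (claws_pos_root w_tab) (claws_pos_root w'_tab).
Qed.

Lemma lob_tableau_iso_pos_roots b :
  order_iso (lob_tableau b) tab_le (is_pos_root b.+2) sub_interval.
Proof.
exists (claws b); split; [exact: claws_pos_root | split; [|split]].
- by move=> w w' w_tab w'_tab; apply: lob_tableau_claws_inj.
- move=> [i j] ij_root; exists (tableau_of_claws b (i, j)); last exact: tableau_of_clawsK.
  exact: lob_tableau_of_claws.
- exact: tab_le_lob_tableau.
Qed.

Lemma minimal_lob_tableau b w : minimal (lob_tableau b) tab_le w <->
  lob_tableau b w /\ top_entry b w = (bot_entry b w).+1.
Proof.
split=> [[w_tab w_min] | [w_tab top_w]].
  split=> //; have [/= bot_lt top_le] := claws_pos_root w_tab.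
  case: (eqVneq (top_entry b w) (bot_entry b w).+1) => // top_ne.
  have p_root : is_pos_root b.+2 ((bot_entry b w).+1, top_entry b w) by split=> /=; lia.
  have p_tab := lob_tableau_of_claws p_root.
  have le_w : tab_le (tableau_of_claws b ((bot_entry b w).+1, top_entry b w)) w.
    by apply/(tab_le_lob_tableau p_tab w_tab); rewrite tableau_of_clawsK //; split=> /=.
  have := congr1 (bot_entry b) (w_min _ p_tab le_w).
  by rewrite [LHS](congr1 fst (tableau_of_clawsK p_root)) /=; lia.
split=> // y y_tab /(tab_le_lob_tableau y_tab w_tab) [/= le_bot le_top].
have [/= ? ?] := claws_pos_root y_tab.
by apply: lob_tableau_claws_inj y_tab w_tab _; rewrite /claws; congr pair; lia.
Qed.

Lemma lob_inv_adjacent b w : lob_tableau b w -> top_entry b w = (bot_entry b w).+1 ->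
  lob_inv b.+2 w = 'C(b, 2) + b.+1.
Proof.
move=> w_tab top_w; rewrite /lob_inv !subSS subn0 /inv_tab /reading_word reading_cells_lob.
rewrite map_cons map_cat map_rev /= -/(top_entry b w) -/(bot_entry b w) -/(body_entries b w).
set D := rev (body_entries b w).
have size_D : size D = b by rewrite size_rev size_map size_map size_iota.
have count_D :
    count (fun y => y < (bot_entry b w).+1) D + count (fun y => bot_entry b w < y) D = size D.
  rewrite -(count_predC (fun y => y < (bot_entry b w).+1)); congr addn.
  by apply: eq_count => y /=; rewrite ltnS ltnNge.
rewrite top_w inversions_cons count_cat [count _ [:: _]]/= ltnSn cats1 inversions_rcons.
rewrite inversions_sorted_gt ?rev_sorted ?sorted_body_entries // size_D; lia.
Qed.

Lemma lob_tableau_enum b (P : nat * nat -> Prop) s : uniq s ->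
    (forall p, p \in s <-> is_pos_root b.+2 p /\ P p) ->
  uniq [seq tableau_of_claws b p | p <- s] /\
  (forall w, w \in [seq tableau_of_claws b p | p <- s] <-> lob_tableau b w /\ P (claws b w)).
Proof.
move=> s_uniq s_mem; split.
  rewrite map_inj_in_uniq // => -[i j] [i' j'] /s_mem [ij_root _] /s_mem [ij'_root _] E.
  by rewrite -(tableau_of_clawsK ij_root) E tableau_of_clawsK.
move=> w; split=> [/mapP [[i j] /s_mem [ij_root Pij] ->] | [w_tab Pw]].
  by rewrite tableau_of_clawsK //; split=> //; exact: lob_tableau_of_claws.
apply/mapP; exists (claws b w); last by rewrite clawsK.
by apply/s_mem; split=> //; exact: claws_pos_root.
Qed.

(* [b.+2 - 2] does not reduce to [b], so [lobSET], [is_M] and [lob_inv] must be rewritten. *)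
Lemma lobSET_lob_tableau b : lobSET b.+2 = lob_tableau b.
Proof. by rewrite /lobSET !subSS subn0. Qed.

Lemma is_M_lob_tableau b j i w :
  is_M b.+2 j i w <-> [/\ lob_tableau b w, top_entry b w = j & bot_entry b w = i].
Proof. by rewrite /is_M lobSET_lob_tableau !subSS subn0; split=> [[? [? ?]] | [? ? ?]]. Qed.

Lemma is_M_unique b i j : is_pos_root b.+2 (i, j) -> exists! w, is_M b.+2 j i w.
Proof.
move=> ij_root; exists (tableau_of_claws b (i, j)); split.
  apply/is_M_lob_tableau; case: (tableau_of_clawsK ij_root) => -> ->.
  by split=> //; exact: lob_tableau_of_claws.
by move=> w /is_M_lob_tableau [w_tab top_w bot_w]; rewrite -(clawsK w_tab) /claws top_w bot_w.
Qed.

Lemma minimal_lob_tableau_is_M b w : minimal (lob_tableau b) tab_le w <->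
  exists i, [/\ 1 <= i, i <= b.+1 & is_M b.+2 i.+1 i w].
Proof.
rewrite minimal_lob_tableau; split=> [[w_tab top_w] | [i [_ _ /is_M_lob_tableau]]].
  have [/= ? ?] := claws_pos_root w_tab.
  by exists (bot_entry b w); split=> //; [lia | exact/is_M_lob_tableau].
by case=> w_tab -> <-.
Qed.

Lemma minimal_lob_tableau_seq b : exists s : seq (seq cell), uniq s /\ size s = b.+1 /\
  forall w, w \in s <-> minimal (lob_tableau b) tab_le w.
Proof.
have [s_uniq s_mem] := lob_tableau_enum (uniq_simple_roots b.+2) (@mem_simple_roots b.+2).
exists [seq tableau_of_claws b p | p <- simple_roots b.+2]; split=> //.
split=> [|w]; first by rewrite !size_map size_iota.
exact: iff_trans (s_mem w) (iff_sym (minimal_lob_tableau b w)).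
Qed.

Lemma lob_tableau_seq b : exists s : seq (seq cell), uniq s /\ size s = 'C(b.+2, 2) /\
  forall w, w \in s <-> lob_tableau b w.
Proof.
have all_roots p : p \in pos_roots b.+2 <-> is_pos_root b.+2 p /\ True.
  by split=> [/mem_pos_roots | [/mem_pos_roots]].
have [s_uniq s_mem] := lob_tableau_enum (uniq_pos_roots b.+2) all_roots.
exists [seq tableau_of_claws b p | p <- pos_roots b.+2]; split=> //.
split=> [|w]; first by rewrite size_map size_pos_roots.
by split=> [/s_mem [] | w_tab]; last exact/s_mem.
Qed.

Theorem proposition5p2 (n : nat) :
  3 <= n ->
  (forall i j, 1 <= i -> i < j -> j <= n -> exists! w, is_M n j i w) /\
  order_iso (lobSET n) tab_le (is_pos_root n) (root_le n) /\
  order_iso (lobSET n) tab_le (grid n) grid_le /\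
  (exists s : seq (seq cell), uniq s /\ size s = n - 1 /\
     forall w, w \in s <-> minimal (lobSET n) tab_le w) /\
  (forall w, minimal (lobSET n) tab_le w <->
     exists i, [/\ 1 <= i, i <= n - 1 & is_M n i.+1 i w]) /\
  (forall w w', minimal (lobSET n) tab_le w -> minimal (lobSET n) tab_le w' ->
     lob_inv n w = lob_inv n w') /\
  (exists s : seq (seq cell), uniq s /\ size s = 'C(n, 2) /\
     forall w, w \in s <-> lobSET n w).
Proof.
move=> n_ge3; have [b ->] : exists b, n = b.+2 by exists (n - 2); lia.
rewrite lobSET_lob_tableau.
split; first by move=> i j i_gt0 ij j_le; apply: is_M_unique; split=> /=; lia.
split; first exact: order_iso_trans (lob_tableau_iso_pos_roots b) (pos_roots_iso_root_le _).
split; first exact: order_iso_trans (lob_tableau_iso_pos_roots b) (pos_roots_iso_grid _).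
split; first exact: minimal_lob_tableau_seq.
split; first exact: minimal_lob_tableau_is_M.
split; last exact: lob_tableau_seq.
move=> w w' /minimal_lob_tableau [w_tab top_w] /minimal_lob_tableau [w'_tab top_w'].
by rewrite !lob_inv_adjacent.
Qed.
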